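(* In the setting and Algorithm 1 described in the context, for every iteration $k\in\{1,\dots,T\}$, every realization of the random choices in iterations $1,\dots,k-1$, and every $i\in[n]$, letting $y^{(i)}_k$ denote the value of $y_k$ obtained when coordinate $i$ is selected in iteration $k$, we have $$f_\mu(x_k)-f_\mu(y^{(i)}_k)\geq\frac12\langle\nabla f_\mu(x_k),\,x_k-y^{(i)}_k\rangle.$$
   Context: Setting: $A\in\mathbb{R}^{m\times n}_{\geq 0}$ has every column nonzero; $\|A_{:i}\|_\infty$ is the largest entry of column $i$. Let $\epsilon\in(0,1)$, $\mu=\frac{\epsilon}{4\log(nm/\epsilon)}$, $L=4/\mu$, $f_\mu(x)=\vec 1^Tx+\mu\sum_{j=1}^m\exp(\frac1\mu(1-(Ax)_j))$, $\Delta=\{x: 0\leq x_i\leq 3/\|A_{:i}\|_\infty\ \forall i\}$, and for $x,y\in\mathbb{R}^n$ let $V_x(y)=\frac12\sum_i\|A_{:i}\|_\infty(x_i-y_i)^2$. Algorithm 1 (input $A$, a starting point $x^{\mathrm{start}}\in\Delta$, $f_\mu$, $\epsilon$): set $\tau=\frac{1}{8nL}$, $T=\lceil 8nL\log(1/\epsilon)\rceil$, $x_0=y_0=z_0=x^{\mathrm{start}}$, $\alpha_0=\frac1{nL}$. For $k=1,\dots,T$: $\alpha_k=\alpha_{k-1}/(1-\tau)$; $x_k=\tau z_{k-1}+(1-\tau)y_{k-1}$; choose $i\in[n]$ uniformly at random; let $\xi_k^{(i)}$ be $\nabla_i f_\mu(x_k)$ truncated to $[-1,1]$; set $z_k=\arg\min_{z\in\Delta}\{V_{z_{k-1}}(z)+n\alpha_k\xi^{(i)}_k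 z_i\}$ (i.e. $z_k$ equals $z_{k-1}$ except its $i$-th coordinate is $z_{k-1,i}-n\alpha_k\xi^{(i)}_k/\|A_{:i}\|_\infty$ projected onto $[0,3/\|A_{:i}\|_\infty]$); set $y_k=x_k+\frac{1}{n\alpha_kL}(z_k-z_{k-1})$. Output $y_T$. *)

From mathcomp Require Import all_boot all_order all_algebra.
From mathcomp Require Import all_classical all_reals all_analysis.
Set Implicit Arguments. Unset Strict Implicit. Unset Printing Implicit Defensive.
Import Order.TTheory GRing.Theory Num.Theory.
Local Open Scope ring_scope.

Section Alg.
Variables (R : realType) (m n : nat).

Definition colmax (A : 'M[R]_(m, n)) (i : 'I_n) : R := \big[Num.max/0]_(j < m) A j i.

Definition Ax (A : 'M[R]_(m, n)) (x : 'rV[R]_n) (j : 'I_m) : R :=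
  \sum_(i < n) A j i * x 0 i.

Definition mu_of (eps : R) : R := eps / (4 * ln ((n * m)%:R / eps)).
Definition L_of (eps : R) : R := 4 / mu_of eps.

Definition f_mu (A : 'M[R]_(m, n)) (eps : R) (x : 'rV[R]_n) : R :=
  \sum_(i < n) x 0 i + mu_of eps * \sum_(j < m) expR ((1 - Ax A x j) / mu_of eps).

Definition e_vec (i : 'I_n) : 'rV[R]_n := \row_(k < n) (if k == i then 1 else 0).

Definition partial (f : 'rV[R]_n -> R) (i : 'I_n) (x : 'rV[R]_n) : R :=
  derive1 (fun t : R => f (x + t *: e_vec i)) 0.

Definition inner (u v : 'rV[R]_n) : R := \sum_(i < n) u 0 i * v 0 i.
Definition grad (f : 'rV[R]_n -> R) (x : 'rV[R]_n) : 'rV[R]_n :=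
  \row_(i < n) partial f i x.

Definition in_Delta (A : 'M[R]_(m, n)) (x : 'rV[R]_n) : Prop :=
  forall i, 0 <= x 0 i <= 3 / colmax A i.

Definition tau_of (eps : R) : R := 1 / (8 * n%:R * L_of eps).
Definition T_of (eps : R) : int := Num.ceil (8 * n%:R * L_of eps * ln (1 / eps)).
Definition alpha_of (eps : R) (k : nat) : R :=
  (1 / (n%:R * L_of eps)) / (1 - tau_of eps) ^+ k.

Definition clamp (lo hi x : R) : R := Num.max lo (Num.min hi x).

(* One iteration k of Algorithm 1 from state (y_{k-1}, z_{k-1}) with selected
   coordinate i.  Returns (x_k, y_k, z_k). *)
Definition step (A : 'M[R]_(m, n)) (eps : R) (k : nat) (yz : 'rV[R]_n * 'rV[R]_n)
    (i : 'I_n) : 'rV[R]_n * 'rV[R]_n * 'rV[R]_n :=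
  let tau := tau_of eps in
  let a := alpha_of eps k in
  let y := yz.1 in let z := yz.2 in
  let x := tau *: z + (1 - tau) *: y in
  let xi := clamp (-1) 1 (partial (f_mu A eps) i x) in
  let z' := \row_(l < n) (if l == i then
                 clamp 0 (3 / colmax A i) (z 0 i - n%:R * a * xi / colmax A i)
               else z 0 l) in
  let y' := x + (1 / (n%:R * a * L_of eps)) *: (z' - z) in
  (x, y', z').

(* State (y_k, z_k) after k iterations, with random choices s 1, ..., s k. *)
Fixpoint state (A : 'M[R]_(m, n)) (eps : R) (xs : 'rV[R]_n) (s : nat -> 'I_n)
    (k : nat) : 'rV[R]_n * 'rV[R]_n :=
  match k with
  | 0 => (xs, xs)
  | k'.+1 => let r := step A eps k'.+1 (state A eps xs s k') (s k'.+1) in (r.1.2, r.2)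
  end.

End Alg.

From mathcomp Require Import all_boot all_order all_algebra.
From mathcomp Require Import all_classical all_reals all_analysis.
From mathcomp Require Import ring lra.
Import Order.TTheory GRing.Theory Num.Theory.
Set Implicit Arguments. Unset Strict Implicit. Unset Printing Implicit Defensive.
Local Open Scope ring_scope.

(* The step of Algorithm 1 moves x only along coordinate i, by d = delta * xi, where
   xi = clamp (-1) 1 (1 - S) is the truncated partial derivative, S = sum_j A_ji w_j with
   w_j = exp ((1 - (Ax)_j) / mu), and the projection onto the box only shrinks delta, so that
   A_ji * delta <= mu / 4.  Along that line
     f_mu x - f_mu (x - d e_i) = d - mu sum_j w_j (exp u_j - 1),  u_j = A_ji d / mu <= |xi| / 4.
   From exp u * (1 - u) <= 1 one gets exp u <= 1 + u + K u^2 with K = 4/3 for u <= 1/4 and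
   K = 1 for u <= 0; the quadratic error is then at most K |xi| S |d| / 4, which stays below
   half the first-order gain (1 - S) d both when S <= 1 and when S > 1. *)

Lemma expR_le_1Dx_sqr (R : realType) (K u : R) :
  u < 1 -> 1 <= K * (1 - u) -> expR u <= 1 + u + K * u ^+ 2.
Proof.
move=> u_lt1 hK; have pos1u : 0 < 1 - u by rewrite subr_gt0.
rewrite -(ler_pM2r pos1u); apply: le_trans (_ : 1 <= _).
  rewrite -[leRHS]expR0 -(subrr u) expRD ler_wpM2l ?expR_ge0 //.
  exact: expR_ge1Dx.
have u2 : 0 <= u ^+ 2 := sqr_ge0 u.
nra.
Qed.

Lemma clamp_id (R : realType) (lo hi x : R) : lo <= x <= hi -> clamp lo hi x = x.
Proof. by case/andP=> lox xhi; rewrite /clamp min_r // max_r. Qed.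

Lemma clamp_lo (R : realType) (lo hi x : R) : lo <= hi -> x <= lo -> clamp lo hi x = lo.
Proof. by move=> lohi xlo; rewrite /clamp min_r ?max_l // (le_trans xlo). Qed.

Lemma clamp_mem (R : realType) (lo hi x : R) : lo <= hi -> lo <= clamp lo hi x <= hi.
Proof. by move=> lohi; rewrite /clamp le_max lexx ge_max lohi ge_min lexx. Qed.

Lemma clamp_sub_scale (R : realType) (lo hi z dl : R) : lo <= z <= hi ->
  exists2 th, 0 <= th <= 1 & clamp lo hi (z - dl) = z - th * dl.
Proof.
move=> /andP[loz zhi].
have [below | above] := ltrP (z - dl) lo.
  have dl_gt0 : 0 < dl by lra.
  exists ((z - lo) / dl).
    by apply/andP; split; [apply: divr_ge0 | rewrite ler_pdivrMr // mul1r]; lra.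
  by rewrite clamp_lo; [field; rewrite gt_eqF | lra | lra].
have [over | inside] := ltrP hi (z - dl).
  have dl_lt0 : dl < 0 by lra.
  exists ((hi - z) / - dl).
    by apply/andP; split; [apply: divr_ge0 | rewrite ler_pdivrMr ?oppr_gt0 // mul1r]; lra.
  rewrite /clamp min_l ?max_r; [by field; rewrite lt_eqF | lra | lra].
exists 1; first by rewrite ler01 lexx.
by rewrite mul1r clamp_id // above inside.
Qed.

Lemma clamp_sqr_le (R : realType) (S : R) : 1 <= S ->
  S * clamp (-1) 1 (1 - S) ^+ 2 <= 2 * (1 - S) * clamp (-1) 1 (1 - S).
Proof.
move=> S_ge1; have [S_le2 | S_gt2] := lerP S 2.
  rewrite clamp_id; last by apply/andP; split; lra.
  have : 0 <= (1 - S) ^+ 2 := sqr_ge0 _.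
  nra.
rewrite clamp_lo; lra.
Qed.

Section ClampedExpDescent.
Variables (R : realType) (I : finType) (mu : R) (p a : I -> R).
Hypotheses (mu_gt0 : 0 < mu) (p_ge0 : forall j, 0 <= p j) (a_ge0 : forall j, 0 <= a j).

Let S := \sum_j a j * p j.

Lemma sum_expR_sub1_le (K M d : R) : 0 <= K ->
  (forall j, a j * `|d| <= M * mu) ->
  (forall j, expR (a j * d / mu) <= 1 + a j * d / mu + K * (a j * d / mu) ^+ 2) ->
  mu * \sum_j p j * (expR (a j * d / mu) - 1) <= S * d + K * M * `|d| * S.
Proof.
move=> K_ge0 small expb; rewrite mulr_sumr !mulr_suml mulr_sumr -big_split /=.
apply: ler_sum => j _.
set u := a j * d / mu; set w := a j * `|d| / mu.
have w_ge0 : 0 <= w by apply: divr_ge0; [apply: mulr_ge0 | apply: ltW].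
have w_leM : w <= M by rewrite /w ler_pdivrMr.
have mu_u : mu * u = a j * d by rewrite /u mulrCA divff ?mulr1 ?gt_eqF.
have mu_w : mu * w = a j * `|d| by rewrite /w mulrCA divff ?mulr1 ?gt_eqF.
have u_sqr : u ^+ 2 = w ^+ 2 by rewrite /u /w !exprMn real_normK ?num_real.
have pj := p_ge0 j; have ej := expb j; rewrite -/u in ej.
have taylor : mu * (p j * (expR u - 1)) <= mu * p j * (u + K * w ^+ 2).
  rewrite mulrA -u_sqr; apply: ler_wpM2l; first exact: mulr_ge0 (ltW _) _.
  lra.
apply: (le_trans taylor).
have Kw : K * w ^+ 2 <= K * M * w by rewrite -mulrA ler_wpM2l // expr2 ler_wpM2r.
have : mu * p j * (u + K * w ^+ 2) <= mu * p j * (u + K * M * w).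
  by apply: ler_wpM2l; [exact: mulr_ge0 (ltW _) _ | rewrite lerD2l].
suff -> : mu * p j * (u + K * M * w) = a j * p j * d + K * M * `|d| * (a j * p j) by [].
transitivity (p j * (mu * u) + K * M * p j * (mu * w)); first by ring.
by rewrite mu_u mu_w; ring.
Qed.

Lemma clamped_exp_descent (delta d : R) :
  0 <= delta -> (forall j, a j * delta <= mu / 4) -> d = delta * clamp (-1) 1 (1 - S) ->
  1 / 2 * ((1 - S) * d) <= d - mu * \sum_j p j * (expR (a j * d / mu) - 1).
Proof.
move=> delta_ge0 a_delta dE; set xi := clamp (-1) 1 (1 - S).
have S_ge0 : 0 <= S by apply: sumr_ge0 => j _; rewrite mulr_ge0.
have /andP[xi_ge xi_le] : -1 <= xi <= 1 by rewrite clamp_mem ?lerN10.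
have small : forall j, a j * `|d| <= `|xi| / 4 * mu.
  move=> j; rewrite dE normrM (ger0_norm delta_ge0) mulrA.
  apply: le_trans (ler_wpM2r (normr_ge0 xi) (a_delta j)) _.
  by rewrite mulrC mulrA mulrAC.
have sum_bound K K_ge0 := @sum_expR_sub1_le K _ _ K_ge0 small.
have u_le : forall j, a j * d / mu <= `|xi| / 4.
  move=> j; rewrite ler_pdivrMr //; apply: le_trans (small j).
  by rewrite ler_wpM2l // ler_norm.
have d_abs : `|xi| * `|d| = delta * xi ^+ 2.
  by rewrite dE normrM (ger0_norm delta_ge0) mulrCA -expr2 real_normK ?num_real.
have D_ge0 : 0 <= delta * xi ^+ 2 by rewrite mulr_ge0 ?sqr_ge0.
have xi_abs : `|xi| <= 1 by rewrite ler_norml xi_ge.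
set E := mu * _.
suff [K [c [K_ge0 expb cE gain]]] : exists K c, [/\ 0 <= K,
    forall j, expR (a j * d / mu) <= 1 + a j * d / mu + K * (a j * d / mu) ^+ 2,
    K * (`|xi| / 4) * `|d| * S = c * (delta * xi ^+ 2) * S &
    c * (delta * xi ^+ 2) * S <= 1 / 2 * ((1 - S) * d)].
  have := sum_bound K K_ge0 expb; rewrite -/E cE; lra.
have dxi : (1 - S) * d = delta * ((1 - S) * xi) by rewrite dE -/xi; ring.
have [S_le1 | S_gt1] := lerP S 1.
  have xiE : xi = 1 - S by rewrite /xi clamp_id //; apply/andP; split; lra.
  exists (4 / 3), (1 / 3); split; first lra.
  - move=> j; apply: expR_le_1Dx_sqr; have := u_le j; lra.
  - by rewrite -d_abs; field.
  rewrite dxi -xiE -expr2.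
  have : 0 <= delta * xi ^+ 2 * (1 - S) by rewrite mulr_ge0 // subr_ge0.
  nra.
have xi_le0 : xi <= 0 by rewrite /xi /clamp ge_max lerN10 ge_min; apply/orP; right; lra.
exists 1, (1 / 4); split => //.
- move=> j; have u_le0 : a j * d / mu <= 0.
    rewrite dE -/xi; apply: mulr_le0_ge0; last by rewrite invr_ge0 ltW.
    exact/mulr_ge0_le0/mulr_ge0_le0.
  by apply: expR_le_1Dx_sqr; lra.
- by rewrite -d_abs; field.
rewrite dxi; have := ler_wpM2l delta_ge0 (clamp_sqr_le (ltW S_gt1)); rewrite -/xi.
lra.
Qed.

End ClampedExpDescent.

Section CoordinateLine.
Variables (R : realType) (m n : nat) (A : 'M[R]_(m, n)) (eps : R).
Implicit Types (x : 'rV[R]_n) (i : 'I_n).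

Let mu := mu_of m n eps.
Let w x j := expR ((1 - Ax A x j) / mu).

Lemma sum_add_e_vec x i t : \sum_l (x + t *: e_vec R i) 0 l = \sum_l x 0 l + t.
Proof.
under eq_bigr do rewrite !mxE; rewrite big_split /=; congr (_ + _).
by rewrite (bigD1 i) //= eqxx mulr1 big1 ?addr0 // => l /negbTE ->; rewrite mulr0.
Qed.

Lemma Ax_add_e_vec x i t j : Ax A (x + t *: e_vec R i) j = Ax A x j + A j i * t.
Proof.
rewrite /Ax; under eq_bigr do rewrite !mxE mulrDr; rewrite big_split /=; congr (_ + _).
by rewrite (bigD1 i) //= eqxx mulr1 big1 ?addr0 // => l /negbTE ->; rewrite !mulr0.
Qed.

Lemma f_mu_along x i t : f_mu A eps (x + t *: e_vec R i) =
  \sum_l x 0 l + t + mu * \sum_j w x j * expR (- (A j i * t) / mu).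
Proof.
rewrite /f_mu sum_add_e_vec; congr (_ + _ * _); apply: eq_bigr => j _.
by rewrite Ax_add_e_vec -expRD -mulrDl opprD addrA.
Qed.

Lemma f_mu_sub_along x i d : f_mu A eps x - f_mu A eps (x - d *: e_vec R i) =
  d - mu * \sum_j w x j * (expR (A j i * d / mu) - 1).
Proof.
rewrite -[in f_mu A eps x](addr0 x) -(scale0r (e_vec R i)) -scaleNr !f_mu_along.
have -> : \sum_j w x j * (expR (A j i * d / mu) - 1) =
    \sum_j w x j * expR (- (A j i * - d) / mu) - \sum_j w x j * expR (- (A j i * 0) / mu).
  rewrite -sumrB; apply: eq_bigr => j _.
  by rewrite mulr0 oppr0 mul0r expR0 mulrN opprK mulrBr mulr1.
ring.
Qed.

Lemma partial_f_mu x i : mu != 0 ->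
  partial (f_mu A eps) i x = 1 - \sum_j A j i * w x j.
Proof.
move=> mu_neq0; rewrite /partial.
pose h j t := w x j * expR (- (A j i * t) / mu).
have -> : (fun t => f_mu A eps (x + t *: e_vec R i)) =
    cst (\sum_l x 0 l) + id + mu *: \sum_j h j.
  by apply/funext => t; rewrite f_mu_along fct_sumE.
have dh j : is_derive (0 : R) 1 (h j) (- (A j i * w x j) / mu).
  have -> : h j = w x j \*: (expR \o (- A j i / mu) \*: id).
    apply/funext => t; rewrite /h /= /GRing.scale /=; congr (_ * expR _); ring.
  apply: is_derive_eq.
  by rewrite /= /GRing.scale /= mulr0 expR0 !mul1r mulr1; ring.
rewrite derive1E derive_val add0r; congr (_ + _).
rewrite /GRing.scale /= mulr_sumr -sumrN; apply: eq_bigr => j _.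
by field.
Qed.

Lemma inner_grad_e_vec (f : 'rV[R]_n -> R) x i d :
  inner (grad f x) (d *: e_vec R i) = partial f i x * d.
Proof.
rewrite /inner (bigD1 i) //= big1 => [|l /negbTE li]; last by rewrite !mxE li !mulr0.
by rewrite !mxE eqxx mulr1 addr0.
Qed.

Lemma f_mu_coordinate_descent x i delta d : 0 < mu -> (forall j, 0 <= A j i) ->
  0 <= delta -> (forall j, A j i * delta <= mu / 4) ->
  d = delta * clamp (-1) 1 (partial (f_mu A eps) i x) ->
  1 / 2 * inner (grad (f_mu A eps) x) (x - (x - d *: e_vec R i))
    <= f_mu A eps x - f_mu A eps (x - d *: e_vec R i).
Proof.
move=> mu_gt0 A_ge0 delta_ge0 small dE.
rewrite opprB addrC subrK inner_grad_e_vec f_mu_sub_along.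
rewrite partial_f_mu ?gt_eqF // in dE *.
apply: (clamped_exp_descent (p := w x) mu_gt0 _ A_ge0 delta_ge0 small dE) => j.
exact: expR_ge0.
Qed.

End CoordinateLine.

Lemma mu_of_gt0 (R : realType) m n (eps : R) :
  (0 < n)%N -> (0 < m)%N -> 0 < eps < 1 -> 0 < mu_of m n eps.
Proof.
move=> n_gt0 m_gt0 /andP[eps_gt0 eps_lt1]; rewrite divr_gt0 // mulr_gt0 // ln_gt0 //.
by rewrite ltr_pdivlMr // mul1r (lt_le_trans eps_lt1) // ler1n muln_gt0 n_gt0.
Qed.

Section Algorithm.
Variables (R : realType) (m n : nat) (A : 'M[R]_(m, n)) (eps : R).
Hypothesis A_ge0 : forall j i, 0 <= A j i.

Lemma colmax_ge0 l : 0 <= colmax A l.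
Proof. exact: (bigmax_ge_id _ 0 xpredT (fun j => A j l)). Qed.

Lemma colmax_ge l j : A j l <= colmax A l.
Proof. exact: (le_bigmax 0 (fun j => A j l)). Qed.

Lemma colmax_gt0 l : (exists j, A j l != 0) -> 0 < colmax A l.
Proof. by case=> j Ajl; rewrite (lt_le_trans _ (colmax_ge l j)) // lt_def Ajl A_ge0. Qed.

Lemma state_in_Delta xs s k : in_Delta A xs -> in_Delta A (state A eps xs s k).2.
Proof.
move=> xs_in; elim: k => [|k IH] l //=.
rewrite mxE; case: eqP => [-> | _]; last exact: IH.
by rewrite clamp_mem // divr_ge0 ?colmax_ge0.
Qed.

Lemma step_descent_direction k (yz : 'rV[R]_n * 'rV[R]_n) i :
  0 < mu_of m n eps -> 0 < colmax A i -> 0 <= yz.2 0 i <= 3 / colmax A i ->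
  let x := (step A eps k yz i).1.1 in
  exists delta, [/\ 0 <= delta, forall j, A j i * delta <= mu_of m n eps / 4 &
    (step A eps k yz i).1.2 =
      x - (delta * clamp (-1) 1 (partial (f_mu A eps) i x)) *: e_vec R i].
Proof.
move=> mu_gt0 c_gt0 z_in x; rewrite /x /step /=.
set X := tau_of m n eps *: yz.2 + _; set xi := clamp (-1) 1 _.
set na := n%:R * alpha_of m n eps k.
set c := colmax A i; set L := L_of m n eps.
have [th /andP[th_ge0 th_le1] clampE] := clamp_sub_scale (na * xi / c) z_in.
set q := 1 / (na * L) * na / c.
have L_gt0 : 0 < L by rewrite /L /L_of divr_gt0.
have [q_ge0 q_le] : 0 <= q /\ q <= mu_of m n eps / 4 / c.
  have -> : mu_of m n eps / 4 / c = 1 / (L * c) by rewrite /L /L_of; field; rewrite !gt_eqF.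
  (* [na] vanishes only through the convention [x / 0 = 0], and then so does the step. *)
  have [na0 | na_neq0] := eqVneq na 0.
    by rewrite /q na0 !(mulr0, mul0r); split => //; apply/ltW/divr_gt0/mulr_gt0.
  have -> : q = 1 / (L * c) by rewrite /q; field; rewrite na_neq0 !gt_eqF.
  by split => //; apply/ltW/divr_gt0/mulr_gt0.
exists (th * q); split; first exact: mulr_ge0.
  move=> j; apply: (le_trans (y := c * (1 * (mu_of m n eps / 4 / c)))).
    by apply: ler_pM; [| exact: mulr_ge0 | exact: colmax_ge | exact: ler_pM].
  by rewrite mul1r mulrC divfK // gt_eqF.
apply/rowP => l; rewrite /e_vec !mxE.
case: eqP => [-> | _]; last by rewrite !mulr0 subr0 subrr mulr0 addr0.
by rewrite clampE /q; ring.
Qed.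

End Algorithm.

Theorem lemma9 (R : realType) (m n : nat) (A : 'M[R]_(m, n)) (eps : R)
    (xs : 'rV[R]_n)
    (hA : forall j i, 0 <= A j i)
    (hcol : forall i : 'I_n, exists j : 'I_m, A j i != 0)
    (heps : 0 < eps < 1)
    (hxs : in_Delta A xs)
    (k : nat) (hk1 : (1 <= k)%N) (hkT : (k%:Z <= @T_of R m n eps)%R)
    (s : nat -> 'I_n) (i : 'I_n) :
  let yz := state A eps xs s k.-1 in
  let r := step A eps k yz i in
  let x := r.1.1 in
  let y := r.1.2 in
  f_mu A eps x - f_mu A eps y >=
    (1 / 2) * inner (grad (f_mu A eps) x) (x - y).
Proof.
cbv zeta.
have n_gt0 : (0 < n)%N := leq_ltn_trans (leq0n i) (ltn_ord i).
have m_gt0 : (0 < m)%N by case: (hcol i) => j _; exact: leq_ltn_trans (leq0n j) (ltn_ord j).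
have mu_gt0 := mu_of_gt0 n_gt0 m_gt0 heps.
have z_in := state_in_Delta eps s k.-1 hxs i.
have [delta [delta_ge0 small yE]] :=
  step_descent_direction hA k mu_gt0 (colmax_gt0 hA (hcol i)) z_in.
rewrite yE.
exact: f_mu_coordinate_descent mu_gt0 (fun j => hA j i) delta_ge0 small erefl.
Qed.
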